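(* Let $G=K_n$ be the complete graph of order $n\geq 3$, let $g:A\to B$ be a function and let $s=|g(A)|$ with $1<s<n$. Then $2(n-s)-1\leq fix(F_G)\leq 2n-s-3$.
   Context: A set $S\subseteq V(H)$ is a fixing set of a graph $H$ if the only automorphism of $H$ fixing every vertex of $S$ is the identity; $fix(H)$ is the minimum cardinality of a fixing set of $H$. Functigraph: let $G_1,G_2$ be disjoint copies of a connected graph $G$, with $A=V(G_1)$, $B=V(G_2)$, and let $g:A\to B$ be a function. The functigraph $F_G$ has vertex set $A\cup B$ and edge set $E(G_1)\cup E(G_2)\cup\{ug(u):u\in A\}$. *)

From mathcomp Require Import all_boot all_fingroup.
Set Implicit Arguments. Unset Strict Implicit. Unset Printing Implicit Defensive.

Definition is_autb (T : finType) (e : rel T) (s : {perm T}) : bool :=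
  [forall x, forall y, e (s x) (s y) == e x y].

Definition fixing_setb (T : finType) (e : rel T) (S : {set T}) : bool :=
  [forall s : {perm T}, (is_autb e s && [forall x in S, s x == x]) ==> (s == 1%g)].

Lemma fixing_setT (T : finType) (e : rel T) :
  exists k, [exists S : {set T}, fixing_setb e S && (#|S| == k)].
Proof.
exists #|[set: T]|; apply/existsP; exists [set: T]; rewrite eqxx andbT.
apply/forallP=> s; apply/implyP=> /andP[_ /forallP H].
apply/eqP/permP=> x; rewrite perm1; apply/eqP.
by have := H x; rewrite in_setT.
Qed.

Definition fix_number (T : finType) (e : rel T) : nat := ex_minn (fixing_setT e).

(* Functigraph F_G: vertices inl u (copy G_1, set A) and inr v (copy G_2, set B);
   edges E(G_1) u E(G_2) u { u g(u) : u in A }. *)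
Definition functigraph (V : finType) (e : rel V) (g : V -> V) : rel (V + V) :=
  fun x y =>
    match x, y with
    | inl u, inl v => e u v
    | inr u, inr v => e u v
    | inl u, inr v => g u == v
    | inr v, inl u => g u == v
    end.

Definition complete_graph (n : nat) : rel 'I_n := fun i j => i != j.

From mathcomp Require Import all_boot all_fingroup.
From mathcomp Require Import zify.
Set Implicit Arguments. Unset Strict Implicit. Unset Printing Implicit Defensive.

(* Lower bound: two vertices of A with the same image under g are twins (their
   transposition is an automorphism), and so are two vertices of B outside g(A).
   A fixing set misses at most one vertex of each twin class, hence contains at
   least n - s vertices of A and n - s - 1 vertices of B.
   Upper bound: leave free one representative of each fibre of g in A and three
   vertices of B: the image g p of a non-representative p, a second image v2 and
   a non-image w.  An automorphism fixing everything else fixes inl p, and the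
   free vertices are then told apart by their degrees and their adjacency to a
   fixed vertex. *)

Lemma cards_sum (T1 T2 : finType) (P : pred (T1 + T2)) :
  #|[set x | P x]| = #|[set a | P (inl a)]| + #|[set b | P (inr b)]|.
Proof.
rewrite -!sum1_card big_sumType.
by congr (_ + _); apply: eq_bigl => ?; rewrite !inE.
Qed.

Lemma exists_injective_section (aT rT : finType) (f : aT -> rT) :
  exists2 R : {set aT}, {in R &, injective f} & f @: R = [set f u | u : aT].
Proof.
exists [set a | [pick u | f u == f a] == Some a].
  move=> a a'; rewrite !inE => /eqP pick_a /eqP pick_a' faa'.
  by move: pick_a; rewrite faa' pick_a' => -[].
apply/setP => v; apply/imsetP/imsetP => -[a _ ->]; first by exists a.
have [u /eqP fu pick_u] : exists2 u, f u == f a & [pick x | f x == f a] = Some u.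
  by case: pickP => [u fu | /(_ a)]; [exists u | rewrite eqxx].
by exists u; rewrite // inE fu pick_u.
Qed.

Section Automorphisms.
Variables (T : finType) (e : rel T).

Definition degree (x : T) : nat := #|[set y | e x y]|.

Lemma autE (s : {perm T}) : is_autb e s -> forall x y, e (s x) (s y) = e x y.
Proof. by move=> /forallP aut_s x y; apply/eqP; move/forallP: (aut_s x). Qed.

Lemma aut_degree (s : {perm T}) x : is_autb e s -> degree (s x) = degree x.
Proof.
move=> aut_s; rewrite /degree -(card_imset [set y | e x y] (@perm_inj _ s)).
apply: eq_card => y; rewrite -(permKV s y) mem_imset ?inE ?autE //.
exact: perm_inj.
Qed.

Lemma tperm_twins_aut x y :
  (forall z, z != x -> z != y -> e x z = e y z /\ e z x = e z y) ->
  e x y = e y x -> e x x = e y y -> is_autb e (tperm x y).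
Proof.
move=> twins exy exx; apply/forallP => a; apply/forallP => b; apply/eqP.
case: (tpermP x y a) => [->|->|/eqP ax /eqP ay];
case: (tpermP x y b) => [->|->|/eqP bx /eqP by_] //;
  by [case: (twins b) | case: (twins a)].
Qed.

Lemma fixing_set_twins (S : {set T}) x y :
  fixing_setb e S -> is_autb e (tperm x y) -> x \notin S -> y \notin S -> x = y.
Proof.
move=> /forallP/(_ (tperm x y))/implyP fixS aut_xy xS yS.
have /eqP/permP/(_ x) : tperm x y == 1%g.
  apply: fixS; rewrite aut_xy; apply/forallP => z; apply/implyP => zS.
  by rewrite tpermD //; [apply: contraNneq xS | apply: contraNneq yS] => ->.
by rewrite tpermL perm1.
Qed.

Lemma aut_fixed_by_signature (s : {perm T}) z x :
  is_autb e s -> s z = z ->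
  (forall y, s y != y -> degree y = degree x -> e y z = e x z -> y = x) ->
  s x = x.
Proof.
move=> aut_s sz sig_x; apply/eqP; apply: contraT => sx.
have sxx : s x = x.
  apply: sig_x; first by rewrite (inj_eq perm_inj).
    exact: aut_degree.
  by rewrite -{1}sz autE.
by rewrite sxx eqxx in sx.
Qed.

Lemma fix_number_min (S : {set T}) : fixing_setb e S -> fix_number e <= #|S|.
Proof.
move=> fixS; rewrite /fix_number; case: ex_minnP => m _; apply.
by apply/existsP; exists S; rewrite fixS eqxx.
Qed.

Lemma fix_numberP : exists2 S : {set T}, fixing_setb e S & #|S| = fix_number e.
Proof.
rewrite /fix_number; case: ex_minnP => m /existsP[S /andP[fixS /eqP <-]] _.
by exists S.
Qed.

End Automorphisms.

Section CompleteFunctigraph.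
Variables (n : nat) (g : 'I_n -> 'I_n).
Local Notation F := (functigraph (@complete_graph n) g).
Local Notation image_g := [set g u | u : 'I_n].

Lemma card_complete_nbhd (a : 'I_n) : #|[set b | complete_graph a b]| = n.-1.
Proof.
rewrite -[n in RHS]card_ord -(cardsC1 a); apply: eq_card => b.
by rewrite !inE eq_sym.
Qed.

Lemma degree_inl a : degree F (inl a) = n.
Proof.
rewrite /degree cards_sum /= card_complete_nbhd.
rewrite (eq_card (B := pred1 (g a))) => [|b]; last by rewrite !inE eq_sym.
by rewrite card1 addn1 prednK // (leq_ltn_trans _ (ltn_ord a)).
Qed.

Lemma degree_inr b : degree F (inr b) = #|g @^-1: [set b]| + n.-1.
Proof.
rewrite /degree cards_sum /= card_complete_nbhd.
by congr (_ + _); apply: eq_card => a; rewrite !inE.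
Qed.

Lemma inl_twins_aut u u' : g u = g u' -> is_autb F (tperm (inl u) (inl u')).
Proof.
move=> guu'; apply: tperm_twins_aut; rewrite /= /complete_graph ?eqxx 1?eq_sym //.
case=> t tu tu' /=; rewrite /complete_graph ?guu' //.
by rewrite !(eq_sym _ t) -!(inj_eq (@inl_inj 'I_n 'I_n)) tu tu'.
Qed.

Lemma inr_twins_aut w w' :
  w \notin image_g -> w' \notin image_g -> is_autb F (tperm (inr w) (inr w')).
Proof.
move=> wg w'g; apply: tperm_twins_aut; rewrite /= /complete_graph ?eqxx 1?eq_sym //.
case=> t tw tw' /=; rewrite /complete_graph.
  have notin_g v : v \notin image_g -> g t == v = false.
    by move=> vg; apply: contraNF vg => /eqP <-; apply: imset_f.
  by rewrite !notin_g.
by rewrite !(eq_sym _ t) -!(inj_eq (@inr_inj 'I_n 'I_n)) tw tw'.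
Qed.

Lemma fixing_set_card_ge (S : {set 'I_n + 'I_n}) :
  fixing_setb F S -> 2 * (n - #|image_g|) - 1 <= #|S|.
Proof.
move=> fixS; rewrite -[#|S|]cardsE cards_sum.
set SA := [set a | inl a \in S]; set SB := [set b | inr b \in S].
have SA_ge : n - #|image_g| <= #|SA|.
  have : #|~: SA| <= #|image_g|.
    rewrite -(card_in_imset (f := g)) => [|a a']; last first.
      rewrite !inE => aS a'S gaa'.
      exact/inl_inj/(fixing_set_twins fixS (inl_twins_aut gaa')).
    by apply/subset_leq_card/subsetP => _ /imsetP[a _ ->]; apply: imset_f.
  have := cardsC SA; rewrite card_ord; lia.
have SB_ge : n - #|image_g| - 1 <= #|SB|.
  have : #|~: image_g :\: SB| <= 1.
    apply/card_le1_eqP => w w'; rewrite !inE => /andP[wS wg] /andP[w'S w'g].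
    exact/esym/inr_inj/(fixing_set_twins fixS (inr_twins_aut wg w'g)).
  move=> /(leq_add (subset_leq_card (subsetIr (~: image_g) SB))).
  rewrite cardsID; have := cardsC image_g; rewrite card_ord; lia.
lia.
Qed.

End CompleteFunctigraph.

Definition sum_setC (T1 T2 : finType) (A : {set T1}) (B : {set T2}) : {set T1 + T2} :=
  [set x | match x with inl a => a \notin A | inr b => b \notin B end].

Lemma card_sum_setC (T1 T2 : finType) (A : {set T1}) (B : {set T2}) :
  #|sum_setC A B| = #|~: A| + #|~: B|.
Proof. by rewrite cards_sum; congr (_ + _); apply: eq_card => ?; rewrite !inE. Qed.

Section RigidSet.
Variables (n : nat) (g : 'I_n -> 'I_n) (R : {set 'I_n}) (p v2 w : 'I_n).
Local Notation F := (functigraph (@complete_graph n) g).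
Hypotheses (injR : {in R &, injective g}) (pR : p \notin R) (v2_gp : v2 != g p).
Hypotheses (fiber_gp : 1 < #|g @^-1: [set g p]|) (fiber_v2 : 0 < #|g @^-1: [set v2]|)
  (fiber_w : #|g @^-1: [set w]| = 0).
Local Notation S := (sum_setC R (g p |: [set v2; w])).

Let w_gp : w != g p.
Proof. by apply: contraTneq fiber_gp => <-; rewrite fiber_w. Qed.

Let w_v2 : w != v2.
Proof. by apply: contraTneq fiber_v2 => <-; rewrite fiber_w. Qed.

Lemma rigid_set_card : #|S| = (n - #|R|) + (n - 3).
Proof.
have := cardsC R; have := cardsC (g p |: [set v2; w]).
rewrite card_sum_setC cardsU1 cards2 !inE ![g p == _]eq_sym (negPf v2_gp) (negPf w_gp).
by rewrite eq_sym w_v2 !card_ord; lia.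
Qed.

Lemma rigid_set_fixing : fixing_setb F S.
Proof.
apply/forallP => s; apply/implyP => /andP[aut_s /forallP fixS].
have fix_S x : x \in S -> s x = x by move/(implyP (fixS x))/eqP.
have moved_inl a : s (inl a) != inl a -> a \in R.
  by apply: contraR => aR; rewrite fix_S // inE.
have moved_inr b : s (inr b) != inr b -> b \in g p |: [set v2; w].
  by apply: contraR => bB; rewrite fix_S // inE.
have n_gt0 : 0 < n := leq_ltn_trans (leq0n p) (ltn_ord p).
have fix_p : s (inl p) = inl p by rewrite fix_S // inE.
have fix_gp : s (inr (g p)) = inr (g p).
  apply: (aut_fixed_by_signature aut_s fix_p) => -[a|b] _ /=.
    by rewrite degree_inl degree_inr; lia.
  by rewrite eqxx => _ /eqP ->.
have fiber_inj : {in [set v2; w] &, injective (fun b => #|g @^-1: [set b]|)}.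
  by move=> b b'; rewrite !inE => /orP[]/eqP-> /orP[]/eqP-> // fb; exfalso; lia.
have fix_v2w b : b \in [set v2; w] -> s (inr b) = inr b.
  move=> bB; have gp_b : (g p == b) = false.
    by apply/negbTE; move: bB; rewrite !inE => /orP[]/eqP->; rewrite eq_sym.
  apply: (aut_fixed_by_signature aut_s fix_p) => -[a|b'] /=.
    move=> /moved_inl aR _; rewrite gp_b /complete_graph => /negbFE/eqP ap.
    by move: pR; rewrite -ap aR.
  move=> /[dup] /moved_inr /setU1P[->|b'B]; first by rewrite fix_gp => /eqP.
  by rewrite !degree_inr => _ /addIn fb _; congr inr; apply: fiber_inj fb.
have fix_inr b : s (inr b) = inr b.
  by case: (eqVneq (s (inr b)) (inr b)) => // /moved_inr /setU1P[-> | /fix_v2w].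
have fix_inl a : s (inl a) = inl a.
  have [aR|aR] := boolP (a \in R); last by rewrite fix_S // inE.
  apply: (aut_fixed_by_signature aut_s (fix_inr (g a))) => -[a'|b] /=.
    by move=> /moved_inl a'R _; rewrite eqxx => /eqP/(injR a'R aR) ->.
  by rewrite fix_inr => /eqP.
by apply/eqP/permP => -[a|b]; rewrite perm1 ?fix_inl ?fix_inr.
Qed.
End RigidSet.


Lemma exists_small_fixing_set n (g : 'I_n -> 'I_n) :
  let s := #|[set g u | u : 'I_n]| in
  1 < s -> s < n ->
  exists2 S, fixing_setb (functigraph (@complete_graph n) g) S & #|S| = (n - s) + (n - 3).
Proof.
move=> s s_gt1 s_lt_n.
have [R injR imR] := exists_injective_section g.
have cardR : #|R| = s by rewrite /s -imR card_in_imset.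
have [p pR] : exists p, p \notin R.
  have /card_gt0P[p] : 0 < #|~: R| by have := cardsC R; rewrite card_ord; lia.
  by rewrite inE; exists p.
have /imsetP[r rR gpr] : g p \in g @: R by rewrite imR imset_f.
have fiber_gp : 1 < #|g @^-1: [set g p]|.
  have pr : p != r by apply: contraNneq pR => ->.
  have <- : #|[set p; r]| = 2 by rewrite cards2 pr.
  by apply/subset_leq_card/subsetP => u; rewrite !inE => /orP[]/eqP->; rewrite ?gpr.
have [v2] : exists v2, v2 \in [set g u | u : 'I_n] :\ g p.
  apply/card_gt0P; have := cardsD1 (g p) [set g u | u : 'I_n].
  by rewrite imset_f // -/s; lia.
rewrite !inE => /andP[v2_gp /imsetP[u _ gu]].
have [w] : exists w, w \in ~: [set g u | u : 'I_n].
  by apply/card_gt0P; have := cardsC [set g u | u : 'I_n]; rewrite card_ord -/s; lia.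
rewrite inE => wg.
have fiber_v2 : 0 < #|g @^-1: [set v2]| by apply/card_gt0P; exists u; rewrite !inE gu.
have fiber_w : #|g @^-1: [set w]| = 0.
  apply/eqP; rewrite cards_eq0; apply/eqP/setP => x; rewrite !inE.
  by apply: contraNF wg => /eqP <-; apply: imset_f.
exists (sum_setC R (g p |: [set v2; w])); first exact: rigid_set_fixing.
by rewrite rigid_set_card ?cardR.
Qed.

Theorem theorem3p1 (n : nat) (g : 'I_n -> 'I_n) :
  3 <= n ->
  let s := #|[set g u | u : 'I_n]| in
  1 < s -> s < n ->
  2 * (n - s) - 1 <= fix_number (functigraph (@complete_graph n) g)
  <= 2 * n - s - 3.
Proof.
(* The hypothesis 3 <= n is implied by 1 < s < n. *)
move=> _ s s_gt1 s_lt_n; apply/andP; split.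
  by have [S fixS <-] := fix_numberP (functigraph (@complete_graph n) g);
    apply: fixing_set_card_ge.
have [S fixS cardS] := exists_small_fixing_set s_gt1 s_lt_n.
by apply: leq_trans (fix_number_min fixS) _; rewrite cardS; lia.
Qed.
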